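(* Let $\alpha>0$ be irrational. Suppose there are sequences of positive integers $(p_n)_{n\ge1},(q_n)_{n\ge1}$ with $q_1<q_2<\cdots$ and a constant $K>0$ such that $|\alpha q_n-p_n|\le K/q_n$ for all $n$, and such that both sequences $(p_n)$ and $(q_n)$ are evenly divisible (respectively, strongly evenly divisible). Then for every $\varepsilon>0$ there is $C>0$ with $\delta_{\min}^{(\alpha)}(N)\le C N^{-1+\varepsilon}$ for infinitely many $N$ (respectively, there is $C>0$ with $\delta_{\min}^{(\alpha)}(N)\le C N^{-1}$ for infinitely many $N$). If in addition there is a constant $c>0$ with $q_n\ge c\,q_{n+1}$ for all $n$, then these inequalities hold for all $N\ge 2$.
   Context: For irrational $\alpha>0$, the numbers $\alpha m^2+n^2$ with integers $m,n\ge 1$ are pairwise distinct; list them in increasing order as $0<\lambda_1<\lambda_2<\cdots$. For $N\ge 2$ define $\delta_{\min}^{(\alpha)}(N)=\min\{\lambda_{i+1}-\lambda_i : 1\le i<N\}$. A sequence of positive integers $(a_n)$ is called evenly divisible if for every $\varepsilon>0$ there is $c_\varepsilon>0$ such that each $a_n$ has a divisor $d\mid a_n$ with $\min(d,a_n/d)\ge c_\varepsilon a_n^{1/2-\varepsilon}$; it is called strongly evenly divisible if there is $c>0$ such that each $a_n$ has a divisor $d\mid a_n$ with $\min(d,a_n/d)\ge c\,a_n^{1/2}$. *)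

From Stdlib Require Import Reals Lra Lia ZArith ClassicalEpsilon.
Open Scope R_scope.

Definition irrational (alpha : R) : Prop :=
  ~ (exists (a b : Z), b <> 0%Z /\ alpha = IZR a / IZR b).

Definition in_spec (alpha x : R) : Prop :=
  exists m n : nat, (1 <= m)%nat /\ (1 <= n)%nat /\
    x = alpha * INR m ^ 2 + INR n ^ 2.

(* l is the increasing enumeration of that set, 0-indexed:
   l 0 = lambda_1, l 1 = lambda_2, ... *)
Definition is_enum (alpha : R) (l : nat -> R) : Prop :=
  (forall i, l i < l (S i)) /\
  (forall x, (exists i, l i = x) <-> in_spec alpha x).

(* lambda_{i+1} = lam alpha i  (the enumeration is unique when it exists,
   which is the case for irrational alpha > 0). *)
Definition lam (alpha : R) : nat -> R :=
  epsilon (inhabits (fun _ : nat => 0)) (is_enum alpha).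

Fixpoint mingap (l : nat -> R) (k : nat) : R :=
  match k with
  | O => l 1%nat - l O
  | S k' => Rmin (mingap l k') (l (S (S k')) - l (S k'))
  end.

(* delta_min^(alpha)(N) = min_{1 <= i < N} (lambda_{i+1} - lambda_i), for N >= 2 *)
Definition delta_min (alpha : R) (N : nat) : R := mingap (lam alpha) (N - 2).

Definition evenly_divisible (a : nat -> nat) : Prop :=
  forall eps : R, 0 < eps -> exists c : R, 0 < c /\
    forall n : nat, exists d : nat, Nat.divide d (a n) /\
      c * Rpower (INR (a n)) (1/2 - eps) <= Rmin (INR d) (INR (a n) / INR d).

Definition strongly_evenly_divisible (a : nat -> nat) : Prop :=
  exists c : R, 0 < c /\
    forall n : nat, exists d : nat, Nat.divide d (a n) /\
      c * sqrt (INR (a n)) <= Rmin (INR d) (INR (a n) / INR d).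

(* Factor q_n = d e and p_n = d' e' with all factors of size at least a constant
   times their product to the power beta, and rewrite 2 q_n = a b, 2 p_n = a' b'
   with a + b, a' + b' = O(q_n^(1 - beta)).  The two spectrum elements
   alpha (a + b)^2 + (a' - b')^2 and alpha (a - b)^2 + (a' + b')^2 differ by exactly
   8 |alpha q_n - p_n| <= 8 K / q_n, and both lie below alpha S^2 + T^2 with
   S = a + b, T = a' + b', a bound that only O((S + T)^2) = O(q_n^(2 (1 - beta)))
   spectrum elements satisfy.  Hence delta_min N <= 8 K / q_n as soon as
   N >> q_n^(2 (1 - beta)); if q_(n+1) = O(q_n), every N lies within a constant
   factor of such a threshold. *)

From Stdlib Require Import Reals Lra Lia ZArith List ClassicalEpsilon Classical FinFun.
Open Scope R_scope.

Lemma nat_gt (r : R) : exists n : nat, r < INR n.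
Proof. destruct (INR_archimed 1 r) as [n Hn]; [lra|]. exists n; lra. Qed.

Lemma Rpower_pos (x y : R) : 0 < Rpower x y.
Proof. unfold Rpower; apply exp_pos. Qed.

Lemma least_in_list (P : R -> Prop) (l : list R) : (exists x, In x l /\ P x) ->
  exists x, In x l /\ P x /\ forall y, In y l -> P y -> x <= y.
Proof.
  induction l as [|a l IH]; intros [x [Hx HPx]]; [destruct Hx|].
  destruct (classic (exists z, In z l /\ P z)) as [Hl|Hl].
  - destruct (IH Hl) as [z [Hz [HPz Hmin]]].
    destruct (classic (P a /\ a < z)) as [[HPa Haz]|Hza].
    + exists a. repeat split; [now left|exact HPa|].
      intros y [<-|Hy] HPy; [lra|]. specialize (Hmin y Hy HPy). lra.
    + exists z. repeat split; [now right|exact HPz|].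
      intros y [<-|Hy] HPy; [|now apply Hmin].
      apply Rnot_lt_le. intro. now apply Hza.
  - destruct Hx as [<-|Hx]; [|exfalso; apply Hl; eauto].
    exists a. repeat split; [now left|exact HPx|].
    intros y [<-|Hy] HPy; [lra|]. exfalso; apply Hl; eauto.
Qed.

Section IncreasingSequences.
Variable l : nat -> R.
Hypothesis Hl : forall i, l i < l (S i).

Lemma increasing_lt i j : (i < j)%nat -> l i < l j.
Proof. induction 1; [apply Hl|]. specialize (Hl m). lra. Qed.

Lemma increasing_le i j : (i <= j)%nat -> l i <= l j.
Proof.
  intros Hij. destruct (Nat.eq_dec i j) as [->|Hne]; [lra|].
  left. apply increasing_lt. lia.
Qed.

Lemma increasing_prefix_length (L : list R) (k : nat) :
  (forall i, (i <= k)%nat -> In (l i) L) -> (S k <= length L)%nat.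
Proof.
  intros Hin.
  replace (S k) with (length (map l (seq 0 (S k)))) by now rewrite length_map, length_seq.
  apply NoDup_incl_length.
  - apply Injective_map_NoDup; [|apply seq_NoDup].
    intros i j Hij. destruct (Nat.lt_total i j) as [H|[H|H]]; auto;
      apply increasing_lt in H; lra.
  - intros x Hx. apply in_map_iff in Hx as [i [<- Hi]]. apply in_seq in Hi. apply Hin. lia.
Qed.

End IncreasingSequences.

Definition below_in_box (alpha y : R) (A B : nat) : Prop :=
  forall m n : nat, (1 <= m)%nat -> (1 <= n)%nat ->
    alpha * INR m ^ 2 + INR n ^ 2 <= y -> (m <= A)%nat /\ (n <= B)%nat.

Fixpoint box_points (alpha : R) (A B : nat) : list R :=
  match A with
  | O => nil
  | S A' => box_points alpha A' B ++ map (fun n => alpha * INR A ^ 2 + INR n ^ 2) (seq 1 B)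
  end.

Lemma length_box_points alpha A B : length (box_points alpha A B) = (A * B)%nat.
Proof.
  induction A as [|A IH]; simpl; auto.
  rewrite length_app, length_map, length_seq, IH. lia.
Qed.

Lemma in_box_points alpha A B m n : (1 <= m <= A)%nat -> (1 <= n <= B)%nat ->
  In (alpha * INR m ^ 2 + INR n ^ 2) (box_points alpha A B).
Proof.
  induction A as [|A IH]; intros Hm Hn; [lia|]. simpl. apply in_or_app.
  destruct (Nat.eq_dec m (S A)) as [->|Hne].
  - right. apply in_map_iff. exists n. split; [reflexivity|]. apply in_seq. lia.
  - left. apply IH; lia.
Qed.

Lemma in_spec_of_box_points alpha A B y : In y (box_points alpha A B) -> in_spec alpha y.
Proof.
  induction A as [|A IH]; simpl; [tauto|]. intros Hy.
  apply in_app_or in Hy as [Hy|Hy]; auto.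
  apply in_map_iff in Hy as [n [<- Hn]]. apply in_seq in Hn.
  exists (S A), n. repeat split; lia.
Qed.

Lemma below_in_box_le_sum alpha (k S T : nat) y : 0 < alpha ->
  alpha <= INR k -> / alpha <= INR k -> y <= alpha * INR S ^ 2 + INR T ^ 2 ->
  below_in_box alpha y (S + k * T) (k * S + T).
Proof.
  intros Ha Hk Hk' Hy m n _ _ Hmn.
  assert (Hak : 1 <= alpha * INR k).
  { apply Rmult_le_compat_l with (r := alpha) in Hk'; [|lra].
    rewrite Rinv_r in Hk'; lra. }
  assert (Hk1 : 1 <= INR k) by nra.
  pose proof (pos_INR m); pose proof (pos_INR n); pose proof (pos_INR S); pose proof (pos_INR T).
  assert (0 <= INR k * INR S * INR T) by (apply Rmult_le_pos; [apply Rmult_le_pos|]; lra).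
  split; apply INR_le; rewrite plus_INR, mult_INR;
    (apply Rsqr_incr_0_var; [rewrite !Rsqr_pow2|nra]).
  - assert (INR m ^ 2 <= INR S ^ 2 + INR k * INR T ^ 2).
    { apply Rmult_le_reg_l with alpha; [lra|]. nra. }
    assert (INR k * INR T ^ 2 <= INR k * INR k * INR T ^ 2)
      by (apply Rmult_le_compat_r; [apply pow2_ge_0|nra]).
    nra.
  - assert (alpha * INR S ^ 2 <= INR k * INR k * INR S ^ 2)
      by (apply Rmult_le_compat_r; [apply pow2_ge_0|nra]).
    nra.
Qed.

Section Enumeration.
Variable alpha : R.
Hypothesis Halpha : 0 < alpha.

Lemma in_spec_pos x : in_spec alpha x -> 0 < x.
Proof.
  intros [m [n [Hm [Hn ->]]]]. apply le_INR in Hm, Hn. simpl in *.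
  assert (0 <= alpha * INR m ^ 2) by (apply Rmult_le_pos; [lra|apply pow2_ge_0]).
  nra.
Qed.

Lemma below_in_box_exists y : exists A B, below_in_box alpha y A B.
Proof.
  destruct (nat_gt (alpha + / alpha)) as [k Hk].
  destruct (nat_gt (y / alpha)) as [S0 HS0].
  assert (Hinv : 0 < / alpha) by now apply Rinv_0_lt_compat.
  exists (S S0 + k * 0)%nat, (k * S S0 + 0)%nat.
  apply below_in_box_le_sum; try lra.
  assert (y < alpha * INR S0).
  { apply Rmult_lt_compat_l with (r := alpha) in HS0; [|lra].
    unfold Rdiv in HS0. rewrite Rmult_comm, Rmult_assoc, Rinv_l in HS0; lra. }
  pose proof (pos_INR S0). rewrite S_INR. simpl. nra.
Qed.

Lemma exists_least_above t : exists x, in_spec alpha x /\ t < x /\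
  forall y, in_spec alpha y -> t < y -> x <= y.
Proof.
  destruct (nat_gt t) as [n Hn].
  set (w := alpha * INR 1 ^ 2 + INR (S n) ^ 2).
  assert (Hw : t < w).
  { unfold w. replace (alpha * INR 1 ^ 2) with alpha by (simpl; ring). rewrite S_INR.
    pose proof (pos_INR n). nra. }
  destruct (below_in_box_exists w) as [A [B Hbox]].
  assert (Hw_box : In w (box_points alpha A B)).
  { destruct (Hbox 1%nat (S n)) as [H1 H2]; try (unfold w; lia || lra).
    apply in_box_points; lia. }
  destruct (least_in_list (fun z => t < z) (box_points alpha A B)) as [x [Hx [Htx Hmin]]];
    [now exists w|].
  exists x. split; [eapply in_spec_of_box_points; eauto|]. split; [exact Htx|].
  intros y Hy Hty. destruct (Rle_lt_dec y w) as [Hyw|Hyw].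
  - destruct Hy as [m [k [Hm [Hk ->]]]].
    destruct (Hbox m k Hm Hk Hyw). apply Hmin; [apply in_box_points; lia|exact Hty].
  - specialize (Hmin w Hw_box Hw). lra.
Qed.

Definition least_above (t : R) : R :=
  proj1_sig (constructive_indefinite_description _ (exists_least_above t)).

Lemma least_above_spec t : in_spec alpha (least_above t) /\ t < least_above t /\
  forall y, in_spec alpha y -> t < y -> least_above t <= y.
Proof. unfold least_above. now destruct constructive_indefinite_description. Qed.

Fixpoint spectrum_seq (i : nat) : R :=
  least_above (match i with O => 0 | S i' => spectrum_seq i' end).

Lemma spectrum_seq_increasing i : spectrum_seq i < spectrum_seq (S i).
Proof. apply (least_above_spec (spectrum_seq i)). Qed.

Lemma spectrum_seq_in_spec i : in_spec alpha (spectrum_seq i).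
Proof. destruct i; apply least_above_spec. Qed.

Lemma spectrum_seq_surj x : in_spec alpha x -> exists i, spectrum_seq i = x.
Proof.
  intros Hx. apply NNPP. intros Hmiss.
  assert (Hbelow : forall i, spectrum_seq i < x).
  { induction i as [|i IH].
    - destruct (least_above_spec 0) as [_ [_ Hmin]].
      destruct (Hmin x Hx (in_spec_pos x Hx)) as [Hlt|Heq]; [exact Hlt|].
      exfalso. apply Hmiss. now exists 0%nat.
    - destruct (least_above_spec (spectrum_seq i)) as [_ [_ Hmin]].
      destruct (Hmin x Hx IH) as [Hlt|Heq]; [exact Hlt|].
      exfalso. apply Hmiss. now exists (S i). }
  destruct (below_in_box_exists x) as [A [B Hbox]].
  assert (Hlen : (S (A * B) <= length (box_points alpha A B))%nat).
  { apply (increasing_prefix_length (spectrum_seq)); [exact spectrum_seq_increasing|].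
    intros i _. destruct (spectrum_seq_in_spec i) as [m [n [Hm [Hn Heq]]]].
    specialize (Hbelow i). rewrite Heq in *.
    destruct (Hbox m n Hm Hn ltac:(lra)). apply in_box_points; lia. }
  rewrite length_box_points in Hlen. lia.
Qed.

End Enumeration.

Lemma lam_is_enum alpha : 0 < alpha -> is_enum alpha (lam alpha).
Proof.
  intros Ha. unfold lam. apply epsilon_spec.
  exists (spectrum_seq alpha Ha). split; [apply spectrum_seq_increasing|].
  intros x. split.
  - intros [i <-]. apply spectrum_seq_in_spec.
  - now apply spectrum_seq_surj.
Qed.

Lemma mingap_le (l : nat -> R) k s : (s <= k)%nat -> mingap l k <= l (S s) - l s.
Proof.
  induction k as [|k IH]; intros Hs; simpl.
  - replace s with 0%nat by lia. lra.
  - destruct (Nat.eq_dec s (S k)) as [->|Hne]; [apply Rmin_r|].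
    eapply Rle_trans; [apply Rmin_l|]. apply IH; lia.
Qed.

Lemma mingap_antimono (l : nat -> R) k k' : (k <= k')%nat -> mingap l k' <= mingap l k.
Proof. induction 1; [lra|]. simpl. eapply Rle_trans; [apply Rmin_l|assumption]. Qed.

Lemma mingap_pos (l : nat -> R) k : (forall i, l i < l (S i)) -> 0 < mingap l k.
Proof.
  intros Hl; induction k as [|k IH]; simpl.
  - specialize (Hl 0%nat). lra.
  - apply Rmin_glb_lt; [exact IH|]. specialize (Hl (S k)). lra.
Qed.

Lemma delta_min_pos alpha N : 0 < alpha -> 0 < delta_min alpha N.
Proof. intros Ha. apply mingap_pos, lam_is_enum, Ha. Qed.

Lemma delta_min_antimono alpha N N' : (N <= N')%nat -> delta_min alpha N' <= delta_min alpha N.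
Proof. intros H. apply mingap_antimono. lia. Qed.

(* At most A * B elements of the spectrum lie below y, so y is among the first
   A * B of them and the gap just below y is one of the gaps measured by delta_min. *)
Lemma delta_min_le_gap alpha x y A B N : 0 < alpha ->
  in_spec alpha x -> in_spec alpha y -> x < y -> below_in_box alpha y A B ->
  (2 <= N)%nat -> (A * B <= N)%nat -> delta_min alpha N <= y - x.
Proof.
  intros Ha Hx Hy Hxy Hbox HN HAB.
  destruct (lam_is_enum alpha Ha) as [Hinc Henum].
  destruct (proj2 (Henum x) Hx) as [i <-].
  destruct (proj2 (Henum y) Hy) as [j <-].
  assert (Hij : (i < j)%nat).
  { destruct (le_lt_dec j i) as [H|H]; [|exact H].
    apply (increasing_le _ Hinc) in H. lra. }
  assert (Hj : (S j <= A * B)%nat).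
  { rewrite <- (length_box_points alpha).
    apply (increasing_prefix_length (lam alpha)); [exact Hinc|]. intros k Hk.
    assert (Hkj : lam alpha k <= lam alpha j) by now apply increasing_le.
    destruct (proj1 (Henum (lam alpha k)) (ex_intro _ k eq_refl)) as [m [n [Hm [Hn Heq]]]].
    rewrite Heq in *. destruct (Hbox m n Hm Hn Hkj). apply in_box_points; lia. }
  destruct j as [|j]; [lia|].
  eapply Rle_trans; [apply (mingap_le _ _ j); lia|].
  assert (lam alpha i <= lam alpha j) by (apply increasing_le; [exact Hinc|lia]).
  lra.
Qed.

Lemma balanced_factor_pair d e : (1 <= d)%nat -> (1 <= e)%nat ->
  exists a b : nat, (b < a)%nat /\ (a * b = 2 * (e * d))%nat /\ (a + b <= 2 * (d + e))%nat.
Proof.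
  intros Hd He. destruct (lt_eq_lt_dec (2 * d) e) as [[H|H]|H].
  - exists e, (2 * d)%nat. nia.
  - exists (2 * e)%nat, d. nia.
  - exists (2 * d)%nat, e. nia.
Qed.

(* The identity (a + b)^2 - (a - b)^2 = 4 a b, used in both coordinates. *)
Lemma spectrum_pair alpha a b a' b' : 0 < alpha -> (b < a)%nat -> (b' < a')%nat ->
  alpha * INR a * INR b <> INR a' * INR b' ->
  exists x y, in_spec alpha x /\ in_spec alpha y /\ x < y /\
    y - x = 4 * Rabs (alpha * INR a * INR b - INR a' * INR b') /\
    y <= alpha * INR (a + b) ^ 2 + INR (a' + b') ^ 2.
Proof.
  intros Ha Hab Hab' Hne.
  set (u := alpha * INR (a + b) ^ 2 + INR (a' - b') ^ 2).
  set (v := alpha * INR (a - b) ^ 2 + INR (a' + b') ^ 2).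
  assert (Hu : in_spec alpha u) by (exists (a + b)%nat, (a' - b')%nat; repeat split; lia).
  assert (Hv : in_spec alpha v) by (exists (a - b)%nat, (a' + b')%nat; repeat split; lia).
  assert (Huv : u - v = 4 * (alpha * INR a * INR b - INR a' * INR b')).
  { unfold u, v. rewrite !plus_INR, !minus_INR by lia. ring. }
  pose proof (pos_INR a); pose proof (pos_INR b); pose proof (pos_INR a'); pose proof (pos_INR b').
  assert (Hu_le : u <= alpha * INR (a + b) ^ 2 + INR (a' + b') ^ 2).
  { unfold u. rewrite !plus_INR, minus_INR by lia. nra. }
  assert (Hv_le : v <= alpha * INR (a + b) ^ 2 + INR (a' + b') ^ 2).
  { unfold v. rewrite !plus_INR, minus_INR by lia.
    assert ((INR a - INR b) ^ 2 <= (INR a + INR b) ^ 2) by nra. nra. }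
  destruct (Rlt_le_dec v u) as [Hvu|Huv'].
  - exists v, u. repeat split; auto. rewrite Huv, Rabs_pos_eq; lra.
  - assert (u <> v) by (intro Heq; apply Hne; lra).
    exists u, v. repeat split; auto; [lra|]. rewrite Rabs_left; lra.
Qed.

Lemma close_pair_in_box alpha (k d e d' e' q p : nat) : 0 < alpha ->
  alpha <= INR k -> / alpha <= INR k -> q = (e * d)%nat -> p = (e' * d')%nat ->
  (1 <= d)%nat -> (1 <= e)%nat -> (1 <= d')%nat -> (1 <= e')%nat ->
  alpha * INR q <> INR p ->
  exists x y A B, in_spec alpha x /\ in_spec alpha y /\ x < y /\
    y - x = 8 * Rabs (alpha * INR q - INR p) /\ below_in_box alpha y A B /\
    (A * B <= k * (2 * (d + e + d' + e')) * (k * (2 * (d + e + d' + e'))))%nat.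
Proof.
  intros Ha Hk Hk' Hq Hp Hd He Hd' He' Hne.
  destruct (balanced_factor_pair d e Hd He) as [a [b [Hab [Hprod Hsum]]]].
  destruct (balanced_factor_pair d' e' Hd' He') as [a' [b' [Hab' [Hprod' Hsum']]]].
  assert (HqR : INR a * INR b = 2 * INR q).
  { rewrite <- mult_INR, Hprod, Hq, mult_INR. reflexivity. }
  assert (HpR : INR a' * INR b' = 2 * INR p).
  { rewrite <- mult_INR, Hprod', Hp, mult_INR. reflexivity. }
  destruct (spectrum_pair alpha a b a' b' Ha Hab Hab') as [x [y [Hx [Hy [Hxy [Hgap Hy_le]]]]]].
  { rewrite Rmult_assoc, HqR, HpR. intro Heq. apply Hne. lra. }
  exists x, y, (a + b + k * (a' + b'))%nat, (k * (a + b) + (a' + b'))%nat.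
  split; [exact Hx|]. split; [exact Hy|]. split; [exact Hxy|]. split; [|split].
  - rewrite Hgap, Rmult_assoc, HqR, HpR.
    replace (alpha * (2 * INR q) - 2 * INR p) with (2 * (alpha * INR q - INR p)) by ring.
    rewrite Rabs_mult, (Rabs_pos_eq 2); lra.
  - now apply below_in_box_le_sum.
  - assert (Hk1 : (1 <= k)%nat) by (destruct k; [simpl in Hk; lra|lia]).
    apply Nat.mul_le_mono; nia.
Qed.

Definition close_pairs (alpha : R) (q : nat -> nat) (g H gam : R) : Prop :=
  forall n, exists x y A B, in_spec alpha x /\ in_spec alpha y /\ x < y /\
    y - x <= g / INR (q n) /\ below_in_box alpha y A B /\
    INR (A * B) <= H * Rpower (INR (q n)) gam.

Lemma close_pairs_delta_min alpha q g H gam : 0 < alpha -> close_pairs alpha q g H gam ->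
  forall n, exists M : nat, INR M <= H * Rpower (INR (q n)) gam /\
    forall N, (2 <= N)%nat -> (M <= N)%nat -> delta_min alpha N <= g / INR (q n).
Proof.
  intros Ha Hpairs n.
  destruct (Hpairs n) as [x [y [A [B [Hx [Hy [Hxy [Hgap [Hbox HAB]]]]]]]]].
  exists (A * B)%nat. split; [exact HAB|]. intros N HN HM.
  eapply Rle_trans; [|exact Hgap]. eapply delta_min_le_gap; eauto.
Qed.

Lemma div_le_rpower_of_le g H gam N Q : 0 < g -> 0 < H -> 0 < gam -> 0 < N -> 0 < Q ->
  N <= H * Rpower Q gam -> g / Q <= g * Rpower H (/ gam) * Rpower N (- / gam).
Proof.
  intros Hg HH Hgam HN HQ Hle.
  assert (Hroot : Rpower N (/ gam) <= Rpower H (/ gam) * Q).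
  { eapply Rle_trans.
    - apply Rle_Rpower_l; [left; now apply Rinv_0_lt_compat|split; [exact HN|exact Hle]].
    - rewrite <- Rpower_mult_distr, Rpower_mult, Rinv_r, Rpower_1 by (apply Rpower_pos || lra).
      lra. }
  rewrite Rpower_Ropp.
  pose proof (Rpower_pos H (/ gam)); pose proof (Rpower_pos N (/ gam)).
  replace (g / Q) with (g * Rpower H (/ gam) * / (Rpower H (/ gam) * Q)) by (field; lra).
  apply Rmult_le_compat_l; [nra|]. now apply Rinv_le_contravar.
Qed.

Lemma div_lt_swap g a b : 0 < a -> 0 < b -> g / a < b -> g / b < a.
Proof.
  intros Ha Hb Hlt.
  replace (g / b) with (g / a * (a / b)) by (field; lra).
  replace a with (b * (a / b)) at 3 by (field; lra).
  apply Rmult_lt_compat_r; [now apply Rdiv_lt_0_compat|exact Hlt].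
Qed.

Lemma le_increasing (q : nat -> nat) : (forall n, (q n < q (S n))%nat) -> forall n, (n <= q n)%nat.
Proof. intros Hq n; induction n as [|n IH]; [lia|]. specialize (Hq n). lia. Qed.

Lemma last_true_before (P : nat -> Prop) M : P 0%nat -> ~ P M -> exists n, P n /\ ~ P (S n).
Proof.
  intros H0; induction M as [|M IH]; intros HM; [contradiction|].
  destruct (classic (P M)) as [HP|HP]; [now exists M|]. now apply IH.
Qed.

Section ClosePairs.
Variables (alpha : R) (q : nat -> nat) (g H gam : R).
Hypotheses (Halpha : 0 < alpha) (Hq : forall n, (0 < q n)%nat)
  (Hinc : forall n, (q n < q (S n))%nat) (Hg : 0 < g) (HH : 0 < H)
  (Hpairs : close_pairs alpha q g H gam).

(* Taking q_n so large that g / q_n < delta_min N0, the pair found at q_n can only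
   be detected beyond N0. *)
Lemma delta_min_rpower_frequently : 0 < gam ->
  exists C, 0 < C /\ forall N0 : nat, exists N : nat, (N0 <= N)%nat /\ (2 <= N)%nat /\
    delta_min alpha N <= C * Rpower (INR N) (- / gam).
Proof.
  intros Hgam. exists (g * Rpower H (/ gam)).
  split; [apply Rmult_lt_0_compat; [exact Hg|apply Rpower_pos]|]. intros N0.
  set (M0 := Nat.max N0 2).
  assert (HdM0 := delta_min_pos alpha M0 Halpha).
  destruct (nat_gt (g / delta_min alpha M0)) as [n Hn].
  assert (HqnR : 0 < INR (q n)) by now apply lt_0_INR.
  assert (Hsmall : g / INR (q n) < delta_min alpha M0).
  { apply div_lt_swap; [exact HdM0|exact HqnR|].
    eapply Rlt_le_trans; [exact Hn|]. now apply le_INR, le_increasing. }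
  destruct (close_pairs_delta_min alpha q g H gam Halpha Hpairs n) as [M [HM Hdelta]].
  destruct (le_lt_dec M M0) as [HMM0|HM0M].
  { specialize (Hdelta M0 ltac:(lia) HMM0). lra. }
  exists M. split; [lia|]. split; [lia|].
  eapply Rle_trans; [apply Hdelta; lia|].
  apply div_le_rpower_of_le; auto. apply lt_0_INR. lia.
Qed.

Lemma bracket_index N : 1 <= gam -> H * Rpower (INR (q 0)) gam <= N ->
  exists n, H * Rpower (INR (q n)) gam <= N < H * Rpower (INR (q (S n))) gam.
Proof.
  intros Hgam HN.
  destruct (nat_gt (N / H)) as [M HM].
  destruct (last_true_before (fun n => H * Rpower (INR (q n)) gam <= N) M HN) as [n [Hn HSn]].
  - intros HMN.
    assert (HqM : INR M <= INR (q M)) by now apply le_INR, le_increasing.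
    assert (Hq1 : 1 <= INR (q M)) by (apply (le_INR 1), Hq).
    assert (INR (q M) <= Rpower (INR (q M)) gam).
    { rewrite <- (Rpower_1 (INR (q M))) at 1 by lra. apply Rle_Rpower; lra. }
    assert (N < H * INR M).
    { apply Rmult_lt_compat_l with (r := H) in HM; [|exact HH].
      unfold Rdiv in HM. rewrite Rmult_comm, Rmult_assoc, Rinv_l in HM; lra. }
    nra.
  - exists n. split; [exact Hn|]. now apply Rnot_le_lt.
Qed.

Lemma delta_min_le_beyond_q0 c N : 1 <= gam -> 0 < c ->
  (forall n, c * INR (q (S n)) <= INR (q n)) -> (2 <= N)%nat ->
  H * Rpower (INR (q 0)) gam <= INR N ->
  delta_min alpha N <= g / c * Rpower H (/ gam) * Rpower (INR N) (- / gam).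
Proof.
  intros Hgam Hc Hratio HN HN0.
  destruct (bracket_index (INR N) Hgam HN0) as [n [Hlow Hhigh]].
  destruct (close_pairs_delta_min alpha q g H gam Halpha Hpairs n) as [M [HM Hdelta]].
  assert (HqnR : 0 < INR (q n)) by now apply lt_0_INR.
  eapply Rle_trans; [apply Hdelta; [exact HN|apply INR_le; lra]|].
  replace (g / INR (q n)) with ((g / c) / (INR (q n) / c)) by (field; lra).
  apply div_le_rpower_of_le; try lra.
  - now apply Rdiv_lt_0_compat.
  - apply lt_0_INR. lia.
  - now apply Rdiv_lt_0_compat.
  - left. eapply Rlt_le_trans; [exact Hhigh|].
    apply Rmult_le_compat_l; [lra|]. apply Rle_Rpower_l; [lra|split].
    + apply lt_0_INR, Hq.
    + specialize (Hratio n). apply Rmult_le_reg_l with c; [exact Hc|].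
      unfold Rdiv. field_simplify; lra.
Qed.

Lemma delta_min_rpower_always c : 1 <= gam -> 0 < c ->
  (forall n, c * INR (q (S n)) <= INR (q n)) ->
  exists C, 0 < C /\ forall N : nat, (2 <= N)%nat ->
    delta_min alpha N <= C * Rpower (INR N) (- / gam).
Proof.
  intros Hgam Hc Hratio.
  set (Q := INR (q 0)). assert (HQ : 0 < Q) by now apply lt_0_INR.
  set (D := delta_min alpha 2). assert (HD : 0 < D) by now apply delta_min_pos.
  pose proof (Rpower_pos H (/ gam)).
  exists (g / c * Rpower H (/ gam) + D * Q * Rpower H (/ gam)). split.
  { assert (0 < g / c) by now apply Rdiv_lt_0_compat.
    assert (0 < D * Q) by now apply Rmult_lt_0_compat.
    apply Rplus_lt_0_compat; now apply Rmult_lt_0_compat. }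
  intros N HN.
  assert (HNR : 0 < INR N) by (apply lt_0_INR; lia).
  pose proof (Rpower_pos (INR N) (- / gam)).
  assert (0 < g / c) by now apply Rdiv_lt_0_compat.
  assert (0 <= g / c * Rpower H (/ gam) * Rpower (INR N) (- / gam)) by
    (apply Rmult_le_pos; [apply Rmult_le_pos|]; lra).
  assert (0 <= D * Q * Rpower H (/ gam) * Rpower (INR N) (- / gam)) by
    (apply Rmult_le_pos; [apply Rmult_le_pos; [apply Rmult_le_pos|]|]; lra).
  rewrite Rmult_plus_distr_r.
  destruct (Rle_lt_dec (H * Rpower Q gam) (INR N)) as [Hbig|Hsmall].
  - pose proof (delta_min_le_beyond_q0 c N Hgam Hc Hratio HN Hbig). lra.
  - assert (H1Q : 1 / Q <= 1 * Rpower H (/ gam) * Rpower (INR N) (- / gam))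
      by (apply div_le_rpower_of_le; lra).
    assert (delta_min alpha N <= D) by now apply delta_min_antimono.
    assert (D <= D * Q * Rpower H (/ gam) * Rpower (INR N) (- / gam)).
    { replace D with (D * Q * (1 / Q)) at 1 by (field; lra).
      rewrite !Rmult_assoc. apply Rmult_le_compat_l; [lra|].
      apply Rmult_le_compat_l; lra. }
    lra.
Qed.

End ClosePairs.

(* evenly_divisible a is balanced_divisors a (1/2 - eps) for every eps > 0;
   strongly_evenly_divisible a is balanced_divisors a (1/2). *)
Definition balanced_divisors (a : nat -> nat) (beta : R) : Prop :=
  exists c : R, 0 < c /\ forall n : nat, exists d : nat, Nat.divide d (a n) /\
    c * Rpower (INR (a n)) beta <= Rmin (INR d) (INR (a n) / INR d).

Lemma sum_factors_le a d e c beta : 0 < a -> 0 < d -> 0 < e -> a = d * e -> 0 < c ->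
  c * Rpower a beta <= d -> c * Rpower a beta <= e ->
  d + e <= 2 / c * Rpower a (1 - beta).
Proof.
  intros Ha Hd He Hde Hc Hd_ge He_ge.
  pose proof (Rpower_pos a beta) as Hs; pose proof (Rpower_pos a (1 - beta)) as Ht.
  assert (Hst : Rpower a beta * Rpower a (1 - beta) = a).
  { rewrite <- Rpower_plus. replace (beta + (1 - beta)) with 1 by ring. now apply Rpower_1. }
  set (s := Rpower a beta) in *. set (t := Rpower a (1 - beta)) in *.
  assert (c * d <= t) by (apply Rmult_le_reg_r with s; nra).
  assert (c * e <= t) by (apply Rmult_le_reg_r with s; nra).
  apply Rmult_le_reg_l with c; [exact Hc|]. field_simplify; lra.
Qed.

Lemma balanced_divisors_factor a beta : (forall n, (0 < a n)%nat) ->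
  balanced_divisors a beta -> exists B, 0 < B /\ forall n, exists d e,
    a n = (e * d)%nat /\ (1 <= d)%nat /\ (1 <= e)%nat /\
    INR d + INR e <= B * Rpower (INR (a n)) (1 - beta).
Proof.
  intros Hpos [c [Hc Hdiv]]. exists (2 / c). split; [apply Rdiv_lt_0_compat; lra|].
  intros n. destruct (Hdiv n) as [d [[e He] Hbound]]. exists d, e.
  specialize (Hpos n).
  assert (Hd : (1 <= d)%nat) by (destruct d; lia).
  assert (He1 : (1 <= e)%nat) by (destruct e; lia).
  repeat split; auto.
  assert (HdR : 0 < INR d) by (apply lt_0_INR; lia).
  assert (Hprod : INR (a n) = INR d * INR e) by (rewrite He, mult_INR; ring).
  assert (Hquot : INR (a n) / INR d = INR e) by (rewrite Hprod; field; lra).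
  rewrite Hquot in Hbound.
  apply sum_factors_le with (c := c); auto.
  - now apply lt_0_INR.
  - apply lt_0_INR; lia.
  - eapply Rle_trans; [exact Hbound|apply Rmin_l].
  - eapply Rle_trans; [exact Hbound|apply Rmin_r].
Qed.

Lemma irrational_mul_neq alpha (p q : nat) : irrational alpha -> (0 < q)%nat ->
  alpha * INR q <> INR p.
Proof.
  intros Hirr Hq Heq. apply Hirr. exists (Z.of_nat p), (Z.of_nat q). split; [lia|].
  rewrite <- !INR_IZR_INZ, <- Heq. field. apply not_0_INR. lia.
Qed.

Lemma le_of_approx alpha K (p q : nat) : 0 < K -> (0 < q)%nat ->
  Rabs (alpha * INR q - INR p) <= K / INR q -> INR p <= (alpha + K) * INR q.
Proof.
  intros HK Hq Happ.
  assert (HqR : 1 <= INR q) by now apply (le_INR 1).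
  assert (K / INR q <= K).
  { apply Rmult_le_reg_r with (INR q); [lra|]. unfold Rdiv.
    rewrite Rmult_assoc, Rinv_l by lra. nra. }
  pose proof (Rle_abs (- (alpha * INR q - INR p))) as Habs. rewrite Rabs_Ropp in Habs.
  nra.
Qed.

Lemma close_pairs_of_balanced alpha p q K beta : 0 < alpha -> irrational alpha ->
  (forall n, (0 < p n)%nat) -> (forall n, (0 < q n)%nat) -> 0 < K ->
  (forall n, Rabs (alpha * INR (q n) - INR (p n)) <= K / INR (q n)) ->
  balanced_divisors p beta -> balanced_divisors q beta -> beta <= 1 ->
  exists H, 0 < H /\ close_pairs alpha q (8 * K) H (2 * (1 - beta)).
Proof.
  intros Ha Hirr Hp Hq HK Happ Hbp Hbq Hbeta.
  destruct (balanced_divisors_factor q beta Hq Hbq) as [Bq [HBq Hfq]].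
  destruct (balanced_divisors_factor p beta Hp Hbp) as [Bp [HBp Hfp]].
  destruct (nat_gt (alpha + / alpha)) as [k Hk].
  assert (Hinv : 0 < / alpha) by now apply Rinv_0_lt_compat.
  set (G := 2 * (Bq + Bp * Rpower (alpha + K) (1 - beta))).
  assert (HG : 0 < G) by (pose proof (Rpower_pos (alpha + K) (1 - beta)); unfold G; nra).
  exists ((INR k * G) ^ 2). split; [apply pow_lt; nra|].
  intros n.
  destruct (Hfq n) as [d [e [Hqde [Hd [He Hde]]]]].
  destruct (Hfp n) as [d' [e' [Hpde [Hd' [He' Hde']]]]].
  assert (Hsum : 2 * (INR d + INR e + INR d' + INR e') <= G * Rpower (INR (q n)) (1 - beta)).
  { assert (Rpower (INR (p n)) (1 - beta) <= Rpower (alpha + K) (1 - beta) * Rpower (INR (q n)) (1 - beta)).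
    { rewrite Rpower_mult_distr by (try apply lt_0_INR, Hq; lra).
      apply Rle_Rpower_l; [lra|split].
      - apply lt_0_INR, Hp.
      - now apply le_of_approx. }
    assert (Bp * Rpower (INR (p n)) (1 - beta) <=
              Bp * (Rpower (alpha + K) (1 - beta) * Rpower (INR (q n)) (1 - beta)))
      by (apply Rmult_le_compat_l; lra).
    unfold G. lra. }
  destruct (close_pair_in_box alpha k d e d' e' (q n) (p n) Ha ltac:(lra) ltac:(lra)
              Hqde Hpde Hd He Hd' He' (irrational_mul_neq alpha (p n) (q n) Hirr (Hq n)))
    as [x [y [A [B [Hx [Hy [Hxy [Hgap [Hbox HAB]]]]]]]]].
  exists x, y, A, B. split; [exact Hx|]. split; [exact Hy|]. split; [exact Hxy|].
  split; [|split; [exact Hbox|]].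
  - rewrite Hgap. specialize (Happ n). unfold Rdiv in *. lra.
  - apply le_INR in HAB. eapply Rle_trans; [exact HAB|].
    rewrite !mult_INR, !plus_INR. replace (INR 2) with 2 by (simpl; ring).
    replace (2 * (1 - beta)) with ((1 - beta) + (1 - beta)) by ring. rewrite Rpower_plus.
    set (P := Rpower (INR (q n)) (1 - beta)) in *.
    pose proof (pos_INR k); pose proof (pos_INR d); pose proof (pos_INR e);
      pose proof (pos_INR d'); pose proof (pos_INR e').
    replace ((INR k * G) ^ 2 * (P * P)) with (INR k * (G * P) * (INR k * (G * P))) by ring.
    apply Rmult_le_compat; try (apply Rmult_le_pos; lra); apply Rmult_le_compat_l; lra.
Qed.

Theorem delta_min_bounds_of_balanced alpha p q K beta : 0 < alpha -> irrational alpha ->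
  (forall n, (0 < p n)%nat) -> (forall n, (0 < q n)%nat) ->
  (forall n, (q n < q (S n))%nat) -> 0 < K ->
  (forall n, Rabs (alpha * INR (q n) - INR (p n)) <= K / INR (q n)) ->
  balanced_divisors p beta -> balanced_divisors q beta -> beta <= 1 / 2 ->
  (exists C, 0 < C /\ forall N0 : nat, exists N : nat, (N0 <= N)%nat /\ (2 <= N)%nat /\
     delta_min alpha N <= C * Rpower (INR N) (- / (2 * (1 - beta)))) /\
  ((exists c, 0 < c /\ forall n, c * INR (q (S n)) <= INR (q n)) ->
   exists C, 0 < C /\ forall N : nat, (2 <= N)%nat ->
     delta_min alpha N <= C * Rpower (INR N) (- / (2 * (1 - beta)))).
Proof.
  intros Ha Hirr Hp Hq Hinc HK Happ Hbp Hbq Hbeta.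
  destruct (close_pairs_of_balanced alpha p q K beta) as [H [HH Hpairs]]; auto; [lra|].
  split.
  - apply (delta_min_rpower_frequently alpha q (8 * K) H); auto; lra.
  - intros [c [Hc Hratio]].
    apply (delta_min_rpower_always alpha q (8 * K) H _ Ha Hq Hinc) with c; auto; lra.
Qed.

Lemma balanced_divisors_of_strongly a : (forall n, (0 < a n)%nat) ->
  strongly_evenly_divisible a -> balanced_divisors a (/ 2).
Proof.
  intros Hpos [c [Hc Hdiv]]. exists c. split; [exact Hc|]. intros n.
  rewrite Rpower_sqrt by apply lt_0_INR, Hpos. apply Hdiv.
Qed.

Lemma rpower_exponent_evenly eps (N : nat) : 0 < eps -> (2 <= N)%nat ->
  Rpower (INR N) (- / (2 * (1 - (1 / 2 - eps / 2)))) <= Rpower (INR N) (-1 + eps).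
Proof.
  intros Heps HN. apply Rle_Rpower; [apply (le_INR 1); lia|].
  replace (2 * (1 - (1 / 2 - eps / 2))) with (1 + eps) by field.
  assert (1 - eps <= / (1 + eps)).
  { apply Rmult_le_reg_r with (1 + eps); [lra|]. rewrite Rinv_l by lra. nra. }
  lra.
Qed.

Lemma rpower_exponent_strongly (N : nat) : (2 <= N)%nat ->
  Rpower (INR N) (- / (2 * (1 - / 2))) = / INR N.
Proof.
  intros HN. replace (2 * (1 - / 2)) with 1 by field.
  rewrite Rinv_1, Rpower_Ropp, Rpower_1; [reflexivity|]. apply lt_0_INR. lia.
Qed.

Theorem lemma3p1 (alpha : R) (p q : nat -> nat) (K : R) :
  0 < alpha -> irrational alpha ->
  (forall n, (0 < p n)%nat) -> (forall n, (0 < q n)%nat) ->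
  (forall n, (q n < q (S n))%nat) ->
  0 < K ->
  (forall n, Rabs (alpha * INR (q n) - INR (p n)) <= K / INR (q n)) ->
  ((evenly_divisible p -> evenly_divisible q ->
      (forall eps, 0 < eps -> exists C, 0 < C /\
         forall N0 : nat, exists N : nat, (N0 <= N)%nat /\ (2 <= N)%nat /\
           delta_min alpha N <= C * Rpower (INR N) (-1 + eps)) /\
      ((exists c, 0 < c /\ forall n, c * INR (q (S n)) <= INR (q n)) ->
       forall eps, 0 < eps -> exists C, 0 < C /\
         forall N : nat, (2 <= N)%nat ->
           delta_min alpha N <= C * Rpower (INR N) (-1 + eps)))
   /\
   (strongly_evenly_divisible p -> strongly_evenly_divisible q ->
      (exists C, 0 < C /\
         forall N0 : nat, exists N : nat, (N0 <= N)%nat /\ (2 <= N)%nat /\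
           delta_min alpha N <= C / INR N) /\
      ((exists c, 0 < c /\ forall n, c * INR (q (S n)) <= INR (q n)) ->
       exists C, 0 < C /\
         forall N : nat, (2 <= N)%nat -> delta_min alpha N <= C / INR N))).
Proof.
  intros Ha Hirr Hp Hq Hinc HK Happ. split.
  - intros Hep Heq.
    pose proof (fun eps (Heps : 0 < eps) =>
      delta_min_bounds_of_balanced alpha p q K (1 / 2 - eps / 2) Ha Hirr Hp Hq Hinc HK Happ
        (Hep (eps / 2) ltac:(lra)) (Heq (eps / 2) ltac:(lra)) ltac:(lra)) as Hbounds.
    split; [intros eps Heps | intros Hratio eps Heps];
      destruct (Hbounds eps Heps) as [Hio Hall].
    + destruct Hio as [C [HC HN]]. exists C. split; [exact HC|]. intros N0.
      destruct (HN N0) as [N [HN0 [HN2 Hd]]]. exists N. split; [exact HN0|]. split; [exact HN2|].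
      eapply Rle_trans; [exact Hd|]. apply Rmult_le_compat_l; [lra|].
      now apply rpower_exponent_evenly.
    + destruct (Hall Hratio) as [C [HC HN]]. exists C. split; [exact HC|]. intros N HN2.
      eapply Rle_trans; [now apply HN|]. apply Rmult_le_compat_l; [lra|].
      now apply rpower_exponent_evenly.
  - intros Hsp Hsq.
    destruct (delta_min_bounds_of_balanced alpha p q K (/ 2) Ha Hirr Hp Hq Hinc HK Happ
      (balanced_divisors_of_strongly p Hp Hsp) (balanced_divisors_of_strongly q Hq Hsq)
      ltac:(lra)) as [[C [HC HN]] Hall].
    split.
    + exists C. split; [exact HC|]. intros N0.
      destruct (HN N0) as [N [HN0 [HN2 Hd]]]. exists N.
      rewrite rpower_exponent_strongly in Hd by exact HN2. auto.
    + intros Hratio. destruct (Hall Hratio) as [C' [HC' HN']]. exists C'.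
      split; [exact HC'|]. intros N HN2.
      specialize (HN' N HN2). now rewrite rpower_exponent_strongly in HN'.
Qed.
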